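(* Let $N=[n(i,j)]$ be an $r\times r$ indecomposable generalised Cartan matrix. There exists an $r\times r$ matrix $A'$ such that (a) $A'_{ii}=1$ for $1\le i\le r$; (b) $A'_{ij}\in\{0,-1\}$ for $i\ne j$; (c) $A'_{ij}+A'_{ji}=n(j,i)$ for all $i,j$; (d) if $A'_{ij}=-1$, then the $i$-th row and the $j$-th column of $A'$ have no other entries equal to $-1$, if and only if $N$ is the generalised Cartan matrix of type $A_r$ ($r\ge1$) or of type $A^{(1)}_{r-1}$ ($r\ge 2$). For $A_1$ or $A^{(1)}_1$ there is exactly one matrix satisfying (a)–(d), and for $A_r$ ($r\ge2$) or $A^{(1)}_{r-1}$ ($r\ge3$) there are exactly two.
   Context: A generalised Cartan matrix is $N=[n(i,j)]_{1\le i,j\le r}$ with $n(i,j)\in\mathbb Z$, $n(i,i)=2$, $n(i,j)\le 0$ for $i\neq j$, and $n(i,j)=0\iff n(j,i)=0$; it is indecomposable if there is no partition of $\{1,\dots,r\}$ into two nonempty sets $I,J$ with $n(i,j)=0$ for all $i\in I,j\in J$. The generalised Cartan matrix of type $A_r$ ($r\ge1$) is the $r\times r$ matrix with $2$ on the diagonal, $-1$ in positions $(i,i\pm1)$ and $0$ elsewhere; that of type $A^{(1)}_1$ is $\begin{pmatrix}2&-2\\-2&2\end{pmatrix}$; that of type $A^{(1)}_{r-1}$ ($r\ge3$) is the $r\times r$ matrix with $2$ on the diagonal, $-1$ in positions $(i,i\pm1)$ and $(1,r),(r,1)$, and $0$ elsewhere. ''$N$ is the generalised Cartan matrix of type X''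 means $N$ equals it up to a simultaneous permutation of rows and columns. *)

From HB Require Import structures.
From mathcomp Require Import all_boot all_order all_algebra all_fingroup.
Set Implicit Arguments. Unset Strict Implicit. Unset Printing Implicit Defensive.
Import Order.TTheory GRing.Theory Num.Theory.
Local Open Scope ring_scope.

Definition is_gcm (r : nat) (N : 'M[int]_r) : Prop :=
  [/\ (forall i, N i i = 2),
      (forall i j, i != j -> N i j <= 0) &
      (forall i j, N i j = 0 <-> N j i = 0)].

Definition indecomposable (r : nat) (N : 'M[int]_r) : Prop :=
  ~ (exists I : {set 'I_r},
        [/\ I != set0, ~: I != set0 &
            forall i j, i \in I -> j \in ~: I -> N i j = 0]).

Definition cartanA (r : nat) : 'M[int]_r :=
  \matrix_(i < r, j < r)
    if i == j then 2
    else if ((i.+1 == j :> nat) || (j.+1 == i :> nat)) then -1 else 0.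

Definition cartanAaff (r : nat) : 'M[int]_r :=
  \matrix_(i < r, j < r)
    if i == j then 2
    else if r == 2%N then -2
    else if [|| (i.+1 == j :> nat), (j.+1 == i :> nat),
                ((i == 0 :> nat) && (j == r.-1 :> nat)) |
                ((j == 0 :> nat) && (i == r.-1 :> nat))] then -1 else 0.

Definition perm_equiv (r : nat) (N M : 'M[int]_r) : Prop :=
  exists s : 'S_r, forall i j, N i j = M (s i) (s j).

Definition is_type_A (r : nat) (N : 'M[int]_r) : Prop :=
  (1 <= r)%N /\ perm_equiv N (cartanA r).

Definition is_type_Aaff (r : nat) (N : 'M[int]_r) : Prop :=
  (2 <= r)%N /\ perm_equiv N (cartanAaff r).

Definition good_Aprime (r : nat) (N A : 'M[int]_r) : Prop :=
  [/\ (forall i, A i i = 1),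
      (forall i j, i != j -> A i j = 0 \/ A i j = -1),
      (forall i j, A i j + A j i = N j i) &
      (forall i j, A i j = -1 ->
         (forall k, k != j -> A i k != -1) /\
         (forall k, k != i -> A k j != -1))].

From HB Require Import structures.
From mathcomp Require Import all_boot all_order all_algebra all_fingroup.
From mathcomp Require Import zify.
Set Implicit Arguments. Unset Strict Implicit. Unset Printing Implicit Defensive.
Import Order.TTheory GRing.Theory Num.Theory.
Local Open Scope ring_scope.

(** The entries -1 of A' are arrows i -> j forming a partial injection
    without loops: at most one arrow leaves and at most one enters each
    vertex. Their components are therefore directed paths and cycles, and by
    (c) N = A' + A'^T is the Cartan matrix of the underlying undirected graph,
    so indecomposability leaves a single path (type A_r) or a single cycle
    (type A^(1)_{r-1}). Conversely, on a path or a cycle condition (d)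
    propagates the orientation of one edge along the whole chain, so A' is one
    of the two orientations, and these coincide exactly for A_1 and
    A^(1)_1. *)

Section GoodAprime.

Variables (r : nat) (N A : 'M[int]_r).
Hypothesis GA : good_Aprime N A.

Lemma goodA_diag i : A i i = 1.
Proof. by case: GA. Qed.

Lemma goodA_offdiag i j : i != j -> A i j = 0 \/ A i j = -1.
Proof. by case: GA => _ + _ _; apply. Qed.

Lemma goodA_sum i j : A i j + A j i = N j i.
Proof. by case: GA. Qed.

Lemma goodA_row_uniq i j k : A i j = -1 -> A i k = -1 -> j = k.
Proof.
move=> Aij Aik; case: GA => _ _ _ /(_ i j Aij) [row_i _].
by apply/eqP; apply: contraT; rewrite eq_sym => /row_i; rewrite Aik eqxx.
Qed.

Lemma goodA_col_uniq i j k : A i j = -1 -> A k j = -1 -> i = k.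
Proof.
move=> Aij Akj; case: GA => _ _ _ /(_ i j Aij) [_ col_j].
by apply/eqP; apply: contraT; rewrite eq_sym => /col_j; rewrite Akj eqxx.
Qed.

Lemma goodA_propagate x y z :
  x != z -> N y x = -1 -> N z y = -1 -> A x y = -1 -> A y z = -1.
Proof.
move=> xz Nxy Nyz Axy.
have yz : y != z.
  by apply/eqP => yz; move: Nyz; rewrite -yz -goodA_sum goodA_diag.
case: (goodA_offdiag yz) => // Ayz.
have Azy : A z y = -1 by rewrite -Nyz -goodA_sum Ayz add0r.
by move: xz; rewrite (goodA_col_uniq Axy Azy) eqxx.
Qed.

End GoodAprime.

Lemma goodA_tr r (N A : 'M[int]_r) :
  good_Aprime N A -> good_Aprime N A^T.
Proof.
move=> [diag off sum arrows]; split.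
- by move=> i; rewrite mxE.
- by move=> i j ij; rewrite mxE; apply: off; rewrite eq_sym.
- by move=> i j; rewrite !mxE addrC sum.
- move=> i j; rewrite mxE => /arrows[row col].
  by split=> k nk; rewrite mxE; [apply: col | apply: row].
Qed.

Lemma goodA_mxsub r (s : 'S_r) (N A : 'M[int]_r) :
  good_Aprime N A -> good_Aprime (mxsub s s N) (mxsub s s A).
Proof.
move=> [diag off sum arrows]; split=> [i | i j ij | i j | i j].
- by rewrite mxE.
- by rewrite mxE; apply: off; rewrite (inj_eq perm_inj).
- by rewrite !mxE.
- rewrite mxE => /arrows[row col]; split=> k nk; rewrite mxE;
    [apply: row | apply: col]; by rewrite (inj_eq perm_inj).
Qed.

Lemma mxsub_permK (R : Type) r (s : 'S_r) (M : 'M[R]_r) :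
  mxsub s^-1%g s^-1%g (mxsub s s M) = M.
Proof. by apply/matrixP => i j; rewrite !mxE !permKV. Qed.

Lemma mxsub_permVK (R : Type) r (s : 'S_r) (M : 'M[R]_r) :
  mxsub s s (mxsub s^-1%g s^-1%g M) = M.
Proof. by apply/matrixP => i j; rewrite !mxE !permK. Qed.

Definition chain_edge (cyc : bool) (p a b : nat) : bool :=
  (a.+1 == b)%N || [&& cyc, a.+1 == p & b == 0]%N.

Lemma chain_edge_irr (cyc : bool) p a :
  (cyc -> 1 < p)%N -> (a < p)%N -> ~~ chain_edge cyc p a a.
Proof. by rewrite /chain_edge; case: cyc => /=; lia. Qed.

Lemma chain_edge_fun cyc p a b c :
  (b < p)%N -> (c < p)%N ->
  chain_edge cyc p a b -> chain_edge cyc p a c -> b = c.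
Proof. by rewrite /chain_edge; lia. Qed.

Lemma chain_edge_inj cyc p a b c :
  (a < p)%N -> (b < p)%N ->
  chain_edge cyc p a c -> chain_edge cyc p b c -> a = b.
Proof. by rewrite /chain_edge; lia. Qed.

Definition chain_orient (cyc : bool) (p : nat) : 'M[int]_p :=
  \matrix_(a, b) ((a == b)%:R - (chain_edge cyc p a b)%:R).

Definition chain_cartan (cyc : bool) (p : nat) : 'M[int]_p :=
  chain_orient cyc p + (chain_orient cyc p)^T.

Lemma chain_cartanE cyc p (a b : 'I_p) :
  chain_cartan cyc p a b = chain_orient cyc p a b + chain_orient cyc p b a.
Proof. by rewrite !mxE. Qed.

Lemma chain_orient_arrow (cyc : bool) p (a b : 'I_p) : (cyc -> 1 < p)%N ->
  (chain_orient cyc p a b == -1) = chain_edge cyc p a b.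
Proof.
move=> cyc_p; rewrite mxE; have [<- | ab] := eqVneq a b.
  by rewrite (negbTE (chain_edge_irr cyc_p (ltn_ord a))).
by case: chain_edge.
Qed.

Lemma chain_orient_good (cyc : bool) p :
  (cyc -> 1 < p)%N -> good_Aprime (chain_cartan cyc p) (chain_orient cyc p).
Proof.
move=> cyc_p; split=> [a | a b ab | a b | a b].
- by rewrite mxE eqxx (negbTE (chain_edge_irr cyc_p (ltn_ord a))) subr0.
- by rewrite mxE (negbTE ab) sub0r; case: chain_edge; [right | left].
- by rewrite chain_cartanE addrC.
move=> /eqP; rewrite chain_orient_arrow // => ab.
split=> k; apply: contraNN; rewrite chain_orient_arrow // => k_edge.
  apply/eqP/val_inj; exact: chain_edge_fun (ltn_ord k) (ltn_ord b) k_edge ab.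
apply/eqP/val_inj; exact: chain_edge_inj (ltn_ord k) (ltn_ord a) k_edge ab.
Qed.

Lemma chain_orient_of_arrows cyc p (B : 'M[int]_p) :
  good_Aprime (chain_cartan cyc p) B ->
  (forall a b : 'I_p, chain_edge cyc p a b -> B a b = -1) ->
  B = chain_orient cyc p.
Proof.
move=> GB arrows; apply/matrixP => a b.
have := goodA_sum GB b a; rewrite chain_cartanE.
have [<- | ab] := eqVneq a b; first by rewrite (goodA_diag GB); lia.
have ba : b != a by rewrite eq_sym.
have := goodA_offdiag GB ab; have := goodA_offdiag GB ba.
have := @arrows a b; have := @arrows b a.
rewrite !mxE (negbTE ab) (negbTE ba); lia.
Qed.

Lemma inord_neq n (a b : nat) : (a <= n)%N -> (b <= n)%N -> a != b ->
  (inord a : 'I_n.+1) != inord b.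
Proof. by move=> ? ? ab; rewrite -val_eqE /= !inordK. Qed.

Lemma chain_cartan_inord cyc n (a b : nat) : (a <= n)%N -> (b <= n)%N ->
  chain_cartan cyc n.+1 (inord a) (inord b) =
  (a == b)%:R - (chain_edge cyc n.+1 a b)%:R
    + ((b == a)%:R - (chain_edge cyc n.+1 b a)%:R).
Proof. by move=> ? ?; rewrite chain_cartanE !mxE -!val_eqE /= !inordK. Qed.

Lemma chain_arrows (cyc : bool) n (B : 'M[int]_n.+1) :
  (cyc -> 0 < n)%N -> good_Aprime (chain_cartan cyc n.+1) B ->
  ((0 < n)%N -> B (inord 0) (inord 1) = -1) ->
  forall a b : 'I_n.+1, chain_edge cyc n.+1 a b -> B a b = -1.
Proof.
move=> cyc_n GB B01.
have path k : (k < n)%N -> B (inord k) (inord k.+1) = -1.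
  elim: k => [|k IH] kn; first exact: B01.
  apply: (goodA_propagate GB _ _ _ (IH (ltnW kn))).
  - by apply: inord_neq; lia.
  - by rewrite chain_cartan_inord /chain_edge; lia.
  - by rewrite chain_cartan_inord /chain_edge; lia.
move=> a b /orP[/eqP ab | /and3P[is_cyc /eqP an /eqP b0]].
  have a_lt_n : (a < n)%N by have := ltn_ord b; lia.
  by have := path a a_lt_n; rewrite ab !inord_val.
have {}an : a = n :> nat by lia.
rewrite -[a]inord_val -[b]inord_val an b0.
have [n1 | n_ne1] := eqVneq n 1%N.
  (* Type A^(1)_1: the arrows 0 -> 1 and 1 -> 0 are both edges of the chain. *)
  have [n0 n0'] : n != 0%N /\ 0%N != n by rewrite n1.
  have := goodA_sum GB (inord n) (inord 0).
  rewrite chain_cartan_inord // /chain_edge.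
  have := goodA_offdiag GB (inord_neq (leqnn n) (leq0n n) n0).
  have := goodA_offdiag GB (inord_neq (leq0n n) (leqnn n) n0').
  lia.
have n_gt1 : (1 < n)%N by have := cyc_n is_cyc; lia.
apply: (goodA_propagate GB (x := inord n.-1)).
- by apply: inord_neq; lia.
- by rewrite chain_cartan_inord /chain_edge; lia.
- by rewrite chain_cartan_inord /chain_edge; lia.
- by have := path n.-1; rewrite prednK; lia.
Qed.

Lemma chain_orient_unique (cyc : bool) n (B : 'M[int]_n.+1) :
  (cyc -> 0 < n)%N -> good_Aprime (chain_cartan cyc n.+1) B ->
  B = chain_orient cyc n.+1 \/ B = (chain_orient cyc n.+1)^T.
Proof.
move=> cyc_n GB; have [n0 | n_gt0] := posnP n.
  left; apply: chain_orient_of_arrows GB (chain_arrows cyc_n GB _) => n_gt0.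
  by rewrite n0 in n_gt0.
have e01 : (inord 0 : 'I_n.+1) != inord 1 by apply: inord_neq.
have [B01 | B01] := goodA_offdiag GB e01; last first.
  by left; apply: chain_orient_of_arrows GB (chain_arrows cyc_n GB (fun=> B01)).
right; rewrite -[B]trmxK; congr trmx.
have GBt := goodA_tr GB.
apply: chain_orient_of_arrows GBt (chain_arrows cyc_n GBt _) => _; rewrite mxE.
have e10 : (inord 1 : 'I_n.+1) != inord 0 by apply: inord_neq.
have := goodA_offdiag GB e10; have := goodA_sum GB (inord 1) (inord 0).
by rewrite B01 addr0 chain_cartan_inord // /chain_edge; lia.
Qed.

Lemma chain_orient_sym (cyc : bool) n :
  ((chain_orient cyc n.+1)^T == chain_orient cyc n.+1)
    = (n == 0)%N || cyc && (n == 1)%N.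
Proof.
apply/eqP/idP => [/matrixP sym | small].
  have [-> // | n_gt0] := posnP n.
  have := sym (inord 1) (inord 0).
  by rewrite !mxE -!val_eqE /= !inordK // /chain_edge; lia.
apply/matrixP => a b; move: small; have := ltn_ord a; have := ltn_ord b.
by rewrite !mxE -!val_eqE /chain_edge; lia.
Qed.

Lemma good_chain_cartanP (cyc : bool) n (s : 'S_n.+1) (B : 'M[int]_n.+1) :
  (cyc -> 0 < n)%N ->
  good_Aprime (mxsub s s (chain_cartan cyc n.+1)) B <->
  B = mxsub s s (chain_orient cyc n.+1) \/
  B = mxsub s s (chain_orient cyc n.+1)^T.
Proof.
move=> cyc_n; have cyc_p : (cyc -> 1 < n.+1)%N by move/cyc_n.
split=> [/(goodA_mxsub s^-1%g) | [] ->].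
- by rewrite mxsub_permK => /(chain_orient_unique cyc_n)[] <-;
    rewrite mxsub_permVK; [left | right].
- exact/goodA_mxsub/chain_orient_good.
- exact/goodA_mxsub/goodA_tr/chain_orient_good.
Qed.

Lemma chain_cartanA p : chain_cartan false p = cartanA p.
Proof.
apply/matrixP => a b; rewrite !mxE -!val_eqE /chain_edge /= !orbF.
by case: ifP => ?; [lia | case: ifP => ?; lia].
Qed.

Lemma chain_cartanAaff p : (1 < p)%N -> chain_cartan true p = cartanAaff p.
Proof.
move=> p_gt1; apply/matrixP => a b; have := ltn_ord a; have := ltn_ord b.
rewrite !mxE -!val_eqE /chain_edge /=.
by case: ifP => ?; [lia | case: ifP => ?; [lia | case: ifP => ?; lia]].
Qed.

Lemma is_type_AE n (N : 'M[int]_n.+1) :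
  is_type_A N <-> exists s : 'S_n.+1, N = mxsub s s (chain_cartan false n.+1).
Proof.
rewrite /is_type_A /perm_equiv -chain_cartanA.
split=> [[_ [s Ns]] | [s ->]].
  by exists s; apply/matrixP => i j; rewrite mxE Ns.
by split=> //; exists s => i j; rewrite mxE.
Qed.

Lemma is_type_AaffE n (N : 'M[int]_n.+1) :
  is_type_Aaff N <->
  (0 < n)%N /\ exists s : 'S_n.+1, N = mxsub s s (chain_cartan true n.+1).
Proof.
rewrite /is_type_Aaff /perm_equiv ltnS.
split=> [[n_gt0 [s Ns]] | [n_gt0 [s ->]]]; split=> //; exists s.
  by apply/matrixP => i j; rewrite mxE Ns chain_cartanAaff.
by move=> i j; rewrite mxE chain_cartanAaff.
Qed.

Definition arrow_next r (A : 'M[int]_r) (i : 'I_r) : 'I_r :=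
  odflt i [pick j | A i j == -1].

Section Arrows.

Variables (r : nat) (N A : 'M[int]_r).
Hypothesis GA : good_Aprime N A.

Local Notation next := (arrow_next A).

Lemma arrow_nextE i j : A i j = -1 -> next i = j.
Proof.
rewrite /arrow_next => Aij; case: pickP => [k /eqP Aik | /(_ j)] /=.
  by rewrite (goodA_row_uniq GA Aij Aik).
by rewrite Aij eqxx.
Qed.

Lemma arrow_next_neq i : next i != i -> A i (next i) = -1.
Proof.
by rewrite /arrow_next; case: pickP => [k /eqP | _] //=; rewrite eqxx.
Qed.

Lemma arrow_next_inj : (forall x, exists y, A x y = -1) -> injective next.
Proof.
move=> out x y nxy; have [x' Axx'] := out x; have [y' Ayy'] := out y.
apply: (goodA_col_uniq GA Axx').
by rewrite -(arrow_nextE Axx') nxy (arrow_nextE Ayy').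
Qed.

Lemma out_arrow_of_in_arrow :
  (forall y, exists x, A x y = -1) -> forall x, exists y, A x y = -1.
Proof.
move=> in_arrow.
have in_arrowb y : exists x, A x y == -1.
  by have [x /eqP] := in_arrow y; exists x.
pose prev y := xchoose (in_arrowb y).
have prevP y : A (prev y) y = -1 by exact/eqP/(xchooseP (in_arrowb y)).
have prev_inj : injective prev.
  move=> u v eq_prev; apply: (goodA_row_uniq GA (prevP u)).
  by rewrite eq_prev prevP.
have [next' _ nextK] := injF_bij prev_inj.
by move=> x; exists (next' x); rewrite -{1}(nextK x) prevP.
Qed.

Lemma source_orbit_closed v0 : (forall x, A x v0 != -1) ->
  forall x y, A x y = -1 -> fconnect next v0 y -> fconnect next v0 x.
Proof.
move=> source x y Axy v0y; have y_lt := findex_max v0y.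
have := iter_findex v0y; case k_def: (findex next v0 y) => [|k] /= z_y.
  by have := source x; rewrite z_y Axy eqxx.
have z_neq : next (iter k next v0) != iter k next v0.
  rewrite k_def in y_lt; apply/eqP => z_fix.
  by have := findex_iter (ltnW y_lt); rewrite -{1}z_fix z_y k_def; lia.
have := arrow_next_neq z_neq; rewrite z_y => Azy.
by rewrite (goodA_col_uniq GA Axy Azy) fconnect_iter.
Qed.

Hypothesis HN : indecomposable N.

Lemma arrow_closed_setT (S : {set 'I_r}) : S != set0 ->
  (forall x y, A x y = -1 -> (x \in S) = (y \in S)) -> S = setT.
Proof.
move=> S_neq0 closed; apply/eqP; apply: contraT => S_neqT; case: HN.
exists S; split=> //.
  by apply: contraNneq S_neqT => SC0; rewrite -[S]setCK SC0 setC0.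
have no_arrow x y : (x \in S) != (y \in S) -> A x y = 0.
  move=> xyS; have xy : x != y by apply: contraNneq xyS => ->.
  by case: (goodA_offdiag GA xy) => // /closed/eqP; rewrite (negbTE xyS).
move=> i j iS; rewrite inE => jS.
by rewrite -(goodA_sum GA j i) !no_arrow ?addr0 // iS (negbTE jS).
Qed.

End Arrows.

Section ChainEnumeration.

Variables (n : nat) (N A : 'M[int]_n.+1).
Hypotheses (GA : good_Aprime N A) (HN : indecomposable N).

Local Notation next := (arrow_next A).

Lemma arrow_chain (cyc : bool) (w : 'I_n.+1 -> 'I_n.+1) : injective w ->
  (forall a b : 'I_n.+1, a.+1 = b :> nat -> A (w a) (w b) = -1) ->
  (cyc -> forall x, exists y, A x y = -1) ->
  (~~ cyc -> forall x, A x (w ord0) != -1) ->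
  forall a b, (A (w a) (w b) == -1) = chain_edge cyc n.+1 a b.
Proof.
move=> w_inj path out_arrow source a b.
have pred_path (c b' : 'I_n.+1) :
    b' != 0%N :> nat -> A (w c) (w b') = -1 -> b' = c.+1 :> nat.
  case: b' => [[|m] m_lt] //= _ Acm; have m_lt' : (m < n.+1)%N by lia.
  have := path (Ordinal m_lt') (Ordinal m_lt) erefl.
  by move/(goodA_col_uniq GA Acm)/w_inj => ->.
have [a_lt | a_ge] := ltnP a n.
  have a1_lt : (a.+1 < n.+1)%N by [].
  have Aa : A (w a) (w (Ordinal a1_lt)) = -1 by exact: path.
  rewrite /chain_edge (_ : (a.+1 == n.+1) = false) /= ?andbF ?orbF; last by lia.
  apply/eqP/eqP => [Aab | /path //].
  by rewrite -(w_inj _ _ (goodA_row_uniq GA Aa Aab)).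
have a_n : a = n :> nat by have := ltn_ord a; lia.
have to_0 b' : A (w a) (w b') = -1 -> b' = ord0.
  move=> Aab'; apply/val_inj/eqP; apply: contraT => b'0.
  by have := pred_path _ _ b'0 Aab'; have := ltn_ord b'; lia.
rewrite /chain_edge a_n eqxx (_ : (n.+1 == b) = false) /=; last first.
  by have := ltn_ord b; lia.
case: cyc out_arrow source => [out_arrow _ | _ source] /=.
  apply/eqP/idP => [/to_0 -> // | b0].
  have [y Ay] := out_arrow isT (w a); have [w' _ wK] := injF_bij w_inj.
  rewrite -(wK y) in Ay; rewrite (_ : b = ord0); last exact/val_inj/eqP.
  by rewrite -(to_0 _ Ay).
apply/negbTE/eqP => Aab; have := source isT (w a).
by rewrite -(to_0 _ Aab) Aab eqxx.
Qed.

Lemma orbit_enum v0 :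
  (forall x y, A x y = -1 -> fconnect next v0 y -> fconnect next v0 x) ->
  exists w : 'I_n.+1 -> 'I_n.+1, [/\ injective w, w ord0 = v0 &
    forall a b : 'I_n.+1, a.+1 = b :> nat -> A (w a) (w b) = -1].
Proof.
move=> pred_closed.
have orbitT : [set y | fconnect next v0 y] = setT.
  apply: (arrow_closed_setT GA HN) => [|x y Axy].
    by apply/set0Pn; exists v0; rewrite inE.
  rewrite !inE; apply/idP/idP => [v0x | /(pred_closed _ _ Axy) //].
  by rewrite -(arrow_nextE GA Axy); apply: connect_trans v0x (fconnect1 _ x).
have order_v0 : fingraph.order next v0 = n.+1.
  rewrite /fingraph.order (eq_cardT (A := fconnect next v0)) ?size_enum_ord //.
  by move=> y; have := in_setT y; rewrite -orbitT inE.
pose w (a : 'I_n.+1) := iter a next v0.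
have w_index (a : 'I_n.+1) : findex next v0 (w a) = a.
  by apply: findex_iter; rewrite order_v0.
have w_inj : injective w.
  by move=> a b wab; apply: ord_inj; rewrite -[LHS]w_index wab w_index.
exists w; split=> // a b ab.
have wb : w b = next (w a) by rewrite /w -ab iterS.
have next_wa : next (w a) != w a.
  by rewrite -wb; apply/eqP => /w_inj ba; move: ab; rewrite ba; lia.
by rewrite wb (arrow_next_neq next_wa).
Qed.

Lemma chain_enum : exists (cyc : bool) (w : 'I_n.+1 -> 'I_n.+1),
  [/\ injective w, (cyc -> 0 < n)%N &
      forall a b, (A (w a) (w b) == -1) = chain_edge cyc n.+1 a b].
Proof.
have [v0 /forallP source | no_source] :=
  pickP (fun v => [forall k, A k v != -1]).
  have [w [w_inj w0 path]] := orbit_enum (source_orbit_closed GA source).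
  exists false, w; split=> //; apply: arrow_chain => // _ x.
  by rewrite w0 source.
have in_arrow y : exists x, A x y = -1.
  by have /forallPn[x /negPn /eqP] := negbT (no_source y); exists x.
have out_arrow := out_arrow_of_in_arrow GA in_arrow.
have orbit_closed x y :
    A x y = -1 -> fconnect next ord0 y -> fconnect next ord0 x.
  move=> Axy /connect_trans; apply.
  rewrite fconnect_sym; last exact: (arrow_next_inj GA).
  by rewrite -(arrow_nextE GA Axy) fconnect1.
have [w [w_inj _ path]] := orbit_enum orbit_closed.
exists true, w; split=> //; last exact: arrow_chain.
move=> _; apply: contraT; rewrite -eqn0Ngt => /eqP n0.
have [y Ay] := out_arrow ord0.
have y0 : y = ord0 by apply: ord_inj => /=; have := ltn_ord y; lia.
by move: Ay; rewrite y0 (goodA_diag GA).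
Qed.

Lemma chain_type : exists (cyc : bool) (s : 'S_n.+1),
  (cyc -> 0 < n)%N /\ N = mxsub s s (chain_cartan cyc n.+1).
Proof.
have [cyc [w [w_inj cyc_n arrows]]] := chain_enum.
have Aw a b : A (w a) (w b) = chain_orient cyc n.+1 a b.
  rewrite mxE; have [<- | ab] := eqVneq a b.
    by rewrite (goodA_diag GA) -arrows (goodA_diag GA).
  have wab : w a != w b by rewrite (inj_eq w_inj).
  by rewrite -arrows sub0r; case: (goodA_offdiag GA wab) => ->.
exists cyc, (perm w_inj)^-1%g; split=> //; apply/matrixP => i j.
by rewrite mxE chain_cartanE -!Aw addrC (goodA_sum GA) -!(permE w_inj) !permKV.
Qed.

End ChainEnumeration.

Lemma good_chain_cartan_unique (cyc : bool) n (s : 'S_n.+1) :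
  (cyc -> 0 < n)%N -> (n == 0)%N || cyc && (n == 1)%N ->
  exists A, good_Aprime (mxsub s s (chain_cartan cyc n.+1)) A /\
    forall B, good_Aprime (mxsub s s (chain_cartan cyc n.+1)) B -> B = A.
Proof.
rewrite -chain_orient_sym => cyc_n /eqP orient_sym.
exists (mxsub s s (chain_orient cyc n.+1)).
split=> [|B]; first by apply/(good_chain_cartanP _ _ cyc_n); left.
by case/(good_chain_cartanP _ _ cyc_n) => ->; rewrite ?orient_sym.
Qed.

Lemma good_chain_cartan_two (cyc : bool) n (s : 'S_n.+1) :
  (cyc -> 0 < n)%N -> ~~ ((n == 0)%N || cyc && (n == 1)%N) ->
  exists A1 A2, [/\ A1 != A2,
    good_Aprime (mxsub s s (chain_cartan cyc n.+1)) A1,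
    good_Aprime (mxsub s s (chain_cartan cyc n.+1)) A2 &
    forall B, good_Aprime (mxsub s s (chain_cartan cyc n.+1)) B ->
      B = A1 \/ B = A2].
Proof.
rewrite -chain_orient_sym => cyc_n orient_asym.
exists (mxsub s s (chain_orient cyc n.+1)),
  (mxsub s s (chain_orient cyc n.+1)^T).
split=> [||| B]; rewrite ?(good_chain_cartanP _ _ cyc_n) //;
  [|by left | by right].
apply: contra_neq orient_asym => /(congr1 (mxsub s^-1%g s^-1%g)).
by rewrite !mxsub_permK => /esym.
Qed.

Theorem lemma3p8 (r : nat) (N : 'M[int]_r) :
  (0 < r)%N -> is_gcm N -> indecomposable N ->
  [/\ (exists A : 'M[int]_r, good_Aprime N A) <-> (is_type_A N \/ is_type_Aaff N),
      ((r = 1%N /\ is_type_A N) \/ (r = 2%N /\ is_type_Aaff N) ->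
         exists A : 'M[int]_r, good_Aprime N A /\
           forall B : 'M[int]_r, good_Aprime N B -> B = A) &
      (((2 <= r)%N /\ is_type_A N) \/ ((3 <= r)%N /\ is_type_Aaff N) ->
         exists A1 A2 : 'M[int]_r,
           [/\ A1 != A2, good_Aprime N A1, good_Aprime N A2 &
               forall B : 'M[int]_r, good_Aprime N B -> B = A1 \/ B = A2])].
Proof.
case: r N => [//|n] N _ _ HN; split.
- split=> [[A GA] | [/is_type_AE[s ->] | /is_type_AaffE[n_gt0 [s ->]]]].
  + have [[] [s [cyc_n ->]]] := chain_type GA HN.
      by right; apply/is_type_AaffE; split; [exact: cyc_n | exists s].
    by left; apply/is_type_AE; exists s.
  + exists (mxsub s s (chain_orient false n.+1)).
    by apply/good_chain_cartanP => //; left.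
  + exists (mxsub s s (chain_orient true n.+1)).
    by apply/good_chain_cartanP => //; left.
- case=> [[r1 /is_type_AE[s ->]] | [r2 /is_type_AaffE[n_gt0 [s ->]]]].
  + by apply: good_chain_cartan_unique => //; case: r1 => ->.
  + by apply: good_chain_cartan_unique => //; case: r2 => ->.
- case=> [[r2 /is_type_AE[s ->]] | [r3 /is_type_AaffE[n_gt0 [s ->]]]];
    apply: good_chain_cartan_two => //; lia.
Qed.
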